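(* Let $-\infty<a<b<\infty$, $K\in\mathbb{R}$, $g\in C^1(\mathbb{R})$, and let $f(x,u,p)=(p-K)^2+g(u)$ for $(x,u,p)\in[a,b]\times\mathbb{R}\times\mathbb{R}$, with $\Phi(u)=\int_a^b f(x,u(x),u'(x))\,dx$ for $u\in C^1([a,b])$. Let $I^{D}_a,I^{D}_b\subset\{1\}$ be arbitrary, let $u^0\in C^1([a,b])$, and let $\mathcal{M}=u^0+C^1_{D}$. If $u^0$ is a weak minimizer of $\Phi$ in $\mathcal{M}$, then $u^0$ is a strong minimizer of $\Phi$ in $\mathcal{M}$.
   Context: Here $N=1$ and $C^1_{D}=\{v\in C^1([a,b]): v(a)=0 \text{ if } 1\in I^{D}_a,\ v(b)=0 \text{ if } 1\in I^{D}_b\}$ (so at each endpoint the value is either fixed to that of $u^0$ or free). A function $w\in\mathcal{M}$ is a weak (resp. strong) minimizer of $\Phi$ in $\mathcal{M}$ if there is $\varepsilon>0$ such that $\Phi(v)\ge\Phi(w)$ for all $v\in\mathcal{M}$ with $\|v-w\|_{C^1}<\varepsilon$ (resp. $\|v-w\|_{C}<\varepsilon$), where $\|v\|_{C^1}=\max|v|+\max|v'|$ and $\|v\|_C=\max|v|$ over $[a,b]$. *)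

From Stdlib Require Import Reals.
From Coquelicot Require Import Coquelicot.
Open Scope R_scope.

(* u is C^1 on [a,b]: differentiable at every point of [a,b] (functions are
   represented by real functions on R; only their values on [a,b] matter),
   with derivative continuous on [a,b] (relative to [a,b]). *)
Definition C1_on (a b : R) (u : R -> R) : Prop :=
  (forall x, a <= x <= b -> ex_derive u x) /\
  (forall x, a <= x <= b -> forall eps, 0 < eps ->
     exists delta, 0 < delta /\
       forall y, a <= y <= b -> Rabs (y - x) < delta ->
         Rabs (Derive u y - Derive u x) < eps).

Definition C1_R (g : R -> R) : Prop :=
  (forall x, ex_derive g x) /\ (forall x, continuous (Derive g) x).

Definition Phi (a b K : R) (g : R -> R) (u : R -> R) : R :=
  RInt (fun x => (Derive u x - K) ^ 2 + g (u x)) a b.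

(* M = u0 + C^1_D : Da (resp. Db) means 1 \in I^D_a (resp. I^D_b). *)
Definition in_M (a b : R) (Da Db : bool) (u0 v : R -> R) : Prop :=
  C1_on a b v /\
  (Da = true -> v a = u0 a) /\ (Db = true -> v b = u0 b).

Definition distC_lt (a b : R) (v w : R -> R) (eps : R) : Prop :=
  exists m, m < eps /\ forall x, a <= x <= b -> Rabs (v x - w x) <= m.

Definition distC1_lt (a b : R) (v w : R -> R) (eps : R) : Prop :=
  exists m1 m2, m1 + m2 < eps /\
    (forall x, a <= x <= b -> Rabs (v x - w x) <= m1) /\
    (forall x, a <= x <= b -> Rabs (Derive v x - Derive w x) <= m2).

Definition weak_minimizer (a b K : R) (g : R -> R) (Da Db : bool) (w : R -> R)
  (u0 : R -> R) : Prop :=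
  in_M a b Da Db u0 w /\
  exists eps, 0 < eps /\ forall v, in_M a b Da Db u0 v ->
    distC1_lt a b v w eps -> Phi a b K g w <= Phi a b K g v.

Definition strong_minimizer (a b K : R) (g : R -> R) (Da Db : bool) (w : R -> R)
  (u0 : R -> R) : Prop :=
  in_M a b Da Db u0 w /\
  exists eps, 0 < eps /\ forall v, in_M a b Da Db u0 v ->
    distC_lt a b v w eps -> Phi a b K g w <= Phi a b K g v.

From Stdlib Require Import Reals Lra.
From Coquelicot Require Import Coquelicot.
Open Scope R_scope.

(* Because [f] is quadratic in [p], for [v], [w] in [M]
     Phi v - Phi w = dPhi(u0)[v - w] + int ((v' - u0')^2 - (w' - u0')^2)
                     + int (g(v) - g(w) - g'(u0) (v - w)),
   and the first variation dPhi(u0) vanishes on admissible directions since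
   [u0] is a weak minimizer; the last integral is o(sup |v - w|) when [v] and
   [w] are uniformly close to [u0].  Let [v] be uniformly close to [u0] and
   psi = v' - u0'.  If int psi^2 is large, [w = u0] already gives
   Phi v >= Phi u0.  Otherwise clip psi at a level T and restore its mean with
   a bump living where |psi| < 3T/4: this is w' - u0' for a competitor [w]
   that is C^1-close to [u0], so Phi w >= Phi u0, and whose loss of energy
   int psi^2 - int (w' - u0')^2 dominates the change of the g-term, so
   Phi v >= Phi w. *)

Create HintDb cont.

(* Coquelicot states the following for arbitrary normed modules, in terms of
   [plus] and [scal]; stated with [+] and [*] they can be used by [rewrite]
   and by syntactic matching. *)
Lemma continuous_Rplus (f h : R -> R) x :
  continuous f x -> continuous h x -> continuous (fun y => f y + h y) x.
Proof. exact (continuous_plus f h x). Qed.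

Lemma continuous_Rminus (f h : R -> R) x :
  continuous f x -> continuous h x -> continuous (fun y => f y - h y) x.
Proof. exact (continuous_minus f h x). Qed.

Lemma continuous_Rmult (f h : R -> R) x :
  continuous f x -> continuous h x -> continuous (fun y => f y * h y) x.
Proof. exact (continuous_mult f h x). Qed.

Lemma continuous_Rsqr (f : R -> R) x :
  continuous f x -> continuous (fun y => f y ^ 2) x.
Proof.
  intros Hf. apply (continuous_ext (fun y => f y * f y) (fun y => f y ^ 2)).
  { intros y. change (f y * f y = f y ^ 2). ring. }
  exact (continuous_mult f f x Hf Hf).
Qed.

Lemma continuous_Rconst (c x : R) : continuous (fun _ : R => c) x.
Proof. apply continuous_const. Qed.

Lemma continuous_Rabs_fun (f : R -> R) x :
  continuous f x -> continuous (fun y => Rabs (f y)) x.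
Proof. exact (continuous_Rabs_comp f x). Qed.

Lemma continuous_eps_delta (f : R -> R) x :
  continuous f x <-> forall eps, 0 < eps -> exists d, 0 < d /\
    forall y, Rabs (y - x) < d -> Rabs (f y - f x) < eps.
Proof.
  split.
  - intros Hf eps Heps.
    destruct (proj2 (continuity_pt_filterlim f x) Hf eps Heps) as [d [Hd H]].
    exists d; split; [exact Hd|]. intros y Hy.
    destruct (Req_dec x y) as [<-|Hxy]; [rewrite Rminus_diag, Rabs_R0; exact Heps|].
    apply H. repeat split; assumption.
  - intros H. apply (proj1 (continuity_pt_filterlim f x)). intros eps Heps.
    destruct (H eps Heps) as [d [Hd Hy]].
    exists d. split; [exact Hd|]. intros y [_ Hy']. apply Hy. exact Hy'.
Qed.

Lemma continuous_lipschitz (f : R -> R) c x :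
  (forall y, Rabs (f y - f x) <= c * Rabs (y - x)) -> continuous f x.
Proof.
  intros Hf. apply continuous_eps_delta. intros eps Heps.
  assert (Hc : 0 < Rabs c + 1) by (pose proof (Rabs_pos c); lra).
  exists (eps / (Rabs c + 1)). split; [apply Rdiv_lt_0_compat; lra|].
  intros y Hy. eapply Rle_lt_trans; [apply Hf|].
  apply Rle_lt_trans with ((Rabs c + 1) * Rabs (y - x)).
  - apply Rmult_le_compat_r; [apply Rabs_pos|]. pose proof (Rle_abs c); lra.
  - apply Rmult_lt_compat_l with (r := Rabs c + 1) in Hy; [|exact Hc].
    replace ((Rabs c + 1) * (eps / (Rabs c + 1))) with eps in Hy by (field; lra).
    exact Hy.
Qed.

Lemma continuous_bounded (f : R -> R) a b : a <= b ->
  (forall x, a <= x <= b -> continuous f x) ->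
  exists B, 0 < B /\ forall x, a <= x <= b -> Rabs (f x) <= B.
Proof.
  intros Hab Hf.
  destruct (continuity_ab_maj (fun x => Rabs (f x)) a b Hab) as [M [HM _]].
  { intros x Hx. apply continuity_pt_filterlim, continuous_Rabs_fun, Hf, Hx. }
  exists (Rabs (f M) + 1). split; [pose proof (Rabs_pos (f M)); lra|].
  intros x Hx. specialize (HM x Hx). lra.
Qed.

Lemma ex_RInt_cont (f : R -> R) a b : a <= b ->
  (forall x, a <= x <= b -> continuous f x) -> ex_RInt f a b.
Proof.
  intros Hab Hf. apply (ex_RInt_continuous (V := R_CompleteNormedModule)).
  rewrite Rmin_left, Rmax_right by exact Hab. exact Hf.
Qed.

Lemma RInt_Rplus (f h : R -> R) a b : ex_RInt f a b -> ex_RInt h a b ->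
  RInt (fun x => f x + h x) a b = RInt f a b + RInt h a b.
Proof. exact (RInt_plus f h a b). Qed.

Lemma RInt_Rminus (f h : R -> R) a b : ex_RInt f a b -> ex_RInt h a b ->
  RInt (fun x => f x - h x) a b = RInt f a b - RInt h a b.
Proof. exact (RInt_minus f h a b). Qed.

Lemma RInt_Rscal (f : R -> R) c a b : ex_RInt f a b ->
  RInt (fun x => c * f x) a b = c * RInt f a b.
Proof. exact (RInt_scal f a b c). Qed.

Lemma RInt_ext_closed (f h : R -> R) a b : a <= b ->
  (forall x, a <= x <= b -> f x = h x) -> RInt f a b = RInt h a b.
Proof.
  intros Hab Hfh. apply RInt_ext. rewrite Rmin_left, Rmax_right by exact Hab.
  intros x Hx. apply Hfh. lra.
Qed.

Lemma RInt_le_closed (f h : R -> R) a b : a <= b -> ex_RInt f a b -> ex_RInt h a b ->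
  (forall x, a <= x <= b -> f x <= h x) -> RInt f a b <= RInt h a b.
Proof. intros Hab Hf Hh Hfh. apply RInt_le; auto. intros x Hx. apply Hfh. lra. Qed.

Lemma RInt_le_of_nonneg (f : R -> R) a x b : a <= x <= b -> ex_RInt f a b ->
  (forall y, a <= y <= b -> 0 <= f y) -> RInt f a x <= RInt f a b.
Proof.
  intros Hx Hf Hpos.
  assert (Hax : ex_RInt f a x)
    by (apply (ex_RInt_Chasles_1 (V := R_CompleteNormedModule)) with b; auto).
  assert (Hxb : ex_RInt f x b)
    by (apply (ex_RInt_Chasles_2 (V := R_CompleteNormedModule)) with a; auto).
  rewrite <- (RInt_Chasles (V := R_CompleteNormedModule) f a x b Hax Hxb).
  assert (0 <= RInt f x b) by (apply RInt_ge_0; [lra | exact Hxb | intros; apply Hpos; lra]).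
  change (RInt f a x <= RInt f a x + RInt f x b). lra.
Qed.

Lemma MVT_remainder_le (g : R -> R) p d eta y1 y2 :
  (forall x, ex_derive g x) ->
  (forall z, Rabs (z - p) <= d -> Rabs (Derive g z - Derive g p) <= eta) ->
  Rabs (y1 - p) <= d -> Rabs (y2 - p) <= d ->
  Rabs (g y1 - g y2 - Derive g p * (y1 - y2)) <= eta * Rabs (y1 - y2).
Proof.
  intros Hg Hd H1 H2.
  destruct (MVT_gen g y2 y1 (Derive g)) as [c [Hc Hmvt]].
  { intros x _. apply Derive_correct, Hg. }
  { intros x _. apply continuity_pt_filterlim, (ex_derive_continuous (V := R_NormedModule)), Hg. }
  rewrite Hmvt.
  replace (Derive g c * (y1 - y2) - Derive g p * (y1 - y2))
    with ((Derive g c - Derive g p) * (y1 - y2)) by ring.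
  rewrite Rabs_mult. apply Rmult_le_compat_r; [apply Rabs_pos|]. apply Hd.
  revert Hc H1 H2. unfold Rmin, Rmax.
  repeat destruct Rle_dec; unfold Rabs; repeat destruct Rcase_abs; intros; lra.
Qed.

Lemma first_order_coef_eq0 A Q :
  (forall eps, 0 < eps -> exists tau, 0 < tau /\
     forall t, Rabs t < tau -> 0 <= t * A + t ^ 2 * Q + eps * Rabs t) ->
  A = 0.
Proof.
  intros H. destruct (Req_dec A 0) as [|HA]; [assumption|exfalso].
  assert (HAp : 0 < Rabs A) by (apply Rabs_pos_lt, HA).
  destruct (H (Rabs A / 2)) as [tau [Htau Ht]]; [lra|].
  pose proof (Rabs_pos Q) as HQ.
  set (r := Rmin (tau / 2) (Rabs A / (4 * (Rabs Q + 1)))).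
  assert (Hr : 0 < r) by (apply Rmin_pos; [lra | apply Rdiv_lt_0_compat; lra]).
  assert (Hrtau : r < tau) by (assert (r <= tau / 2) by apply Rmin_l; lra).
  assert (HrQ : r * Rabs Q <= Rabs A / 4).
  { assert (r <= Rabs A / (4 * (Rabs Q + 1))) by apply Rmin_r.
    apply Rle_trans with (Rabs A / (4 * (Rabs Q + 1)) * (Rabs Q + 1)); [nra|].
    apply Req_le. field. lra. }
  set (t := if Rle_dec 0 A then - r else r).
  assert (Hta : Rabs t = r /\ t * A = - (r * Rabs A)).
  { unfold t. destruct Rle_dec.
    - rewrite Rabs_Ropp, !Rabs_pos_eq by lra. split; ring.
    - rewrite Rabs_pos_eq, Rabs_left by lra. split; ring. }
  destruct Hta as [Htr HtA].
  specialize (Ht t). rewrite Htr, HtA in Ht. specialize (Ht Hrtau).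
  assert (t ^ 2 * Q <= r * (r * Rabs Q)).
  { assert (Ht2 : t ^ 2 = r * r) by (rewrite <- pow2_abs, Htr; ring).
    rewrite Ht2, Rmult_assoc.
    apply Rmult_le_compat_l; [nra|]. apply Rmult_le_compat_l; [lra | apply Rle_abs]. }
  assert (r * (r * Rabs Q) <= r * (Rabs A / 4)) by (apply Rmult_le_compat_l; lra).
  assert (0 < r * Rabs A) by (apply Rmult_lt_0_compat; assumption).
  lra.
Qed.

Definition clamp (a b x : R) : R := Rmax a (Rmin b x).

(* [Derive u] is only continuous relative to [[a, b]]; freezing it outside
   [[a, b]] gives a function continuous on all of [R], as Coquelicot's
   integrability lemmas require. *)
Definition Derive_clamp (a b : R) (u : R -> R) (x : R) : R := Derive u (clamp a b x).

Section C1_functions.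

Variables a b : R.
Hypothesis Hab : a <= b.

Lemma clamp_mem x : a <= clamp a b x <= b.
Proof. unfold clamp, Rmax, Rmin. repeat destruct Rle_dec; lra. Qed.

Lemma clamp_id x : a <= x <= b -> clamp a b x = x.
Proof. intros. unfold clamp, Rmax, Rmin. repeat destruct Rle_dec; lra. Qed.

Lemma clamp_lipschitz x y : Rabs (clamp a b y - clamp a b x) <= Rabs (y - x).
Proof.
  unfold clamp, Rmax, Rmin.
  repeat destruct Rle_dec; unfold Rabs; repeat destruct Rcase_abs; lra.
Qed.

Lemma Derive_clamp_id u x : a <= x <= b -> Derive_clamp a b u x = Derive u x.
Proof. intros Hx. unfold Derive_clamp. rewrite clamp_id by exact Hx. reflexivity. Qed.

Lemma C1_on_iff u : C1_on a b u <->
  (forall x, a <= x <= b -> ex_derive u x) /\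
  (forall x, continuous (Derive_clamp a b u) x).
Proof.
  split; intros [Hd Hc]; split; try exact Hd.
  - intros x. apply continuous_eps_delta. intros eps Heps.
    destruct (Hc (clamp a b x) (clamp_mem x) eps Heps) as [d [Hdpos H]].
    exists d. split; [exact Hdpos|]. intros y Hy. apply H; [apply clamp_mem|].
    eapply Rle_lt_trans; [apply clamp_lipschitz | exact Hy].
  - intros x Hx eps Heps.
    destruct (proj1 (continuous_eps_delta _ x) (Hc x) eps Heps) as [d [Hdpos H]].
    exists d. split; [exact Hdpos|]. intros y Hy Hyx.
    rewrite <- (Derive_clamp_id u x Hx), <- (Derive_clamp_id u y Hy). exact (H y Hyx).
Qed.

Lemma C1_on_continuous u x : C1_on a b u -> a <= x <= b -> continuous u x.
Proof. intros [Hd _] Hx. apply (ex_derive_continuous (V := R_NormedModule)), Hd, Hx. Qed.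

Lemma continuous_Derive_clamp u x : C1_on a b u -> continuous (Derive_clamp a b u) x.
Proof. intros Hu. exact (proj2 (proj1 (C1_on_iff u) Hu) x). Qed.

Lemma Derive_clamp_plus u w x : C1_on a b u -> C1_on a b w ->
  Derive_clamp a b (fun y => u y + w y) x = Derive_clamp a b u x + Derive_clamp a b w x.
Proof.
  intros [Hu _] [Hw _]. apply (Derive_plus u w); [apply Hu | apply Hw]; apply clamp_mem.
Qed.

Lemma Derive_clamp_minus u w x : C1_on a b u -> C1_on a b w ->
  Derive_clamp a b (fun y => u y - w y) x = Derive_clamp a b u x - Derive_clamp a b w x.
Proof.
  intros [Hu _] [Hw _]. apply (Derive_minus u w); [apply Hu | apply Hw]; apply clamp_mem.
Qed.

Lemma Derive_clamp_scal u t x :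
  Derive_clamp a b (fun y => t * u y) x = t * Derive_clamp a b u x.
Proof. apply Derive_scal. Qed.

Lemma C1_on_plus u w : C1_on a b u -> C1_on a b w -> C1_on a b (fun x => u x + w x).
Proof.
  intros Hu Hw. apply C1_on_iff. split.
  - intros x Hx. apply (ex_derive_plus u w); [apply Hu | apply Hw]; exact Hx.
  - intros x. apply (continuous_ext (fun y => Derive_clamp a b u y + Derive_clamp a b w y)).
    + intros y. symmetry. apply Derive_clamp_plus; assumption.
    + apply continuous_Rplus; apply continuous_Derive_clamp; assumption.
Qed.

Lemma C1_on_minus u w : C1_on a b u -> C1_on a b w -> C1_on a b (fun x => u x - w x).
Proof.
  intros Hu Hw. apply C1_on_iff. split.
  - intros x Hx. apply (ex_derive_minus u w); [apply Hu | apply Hw]; exact Hx.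
  - intros x. apply (continuous_ext (fun y => Derive_clamp a b u y - Derive_clamp a b w y)).
    + intros y. symmetry. apply Derive_clamp_minus; assumption.
    + apply continuous_Rminus; apply continuous_Derive_clamp; assumption.
Qed.

Lemma C1_on_scal u t : C1_on a b u -> C1_on a b (fun x => t * u x).
Proof.
  intros Hu. apply C1_on_iff. split.
  - intros x Hx. apply ex_derive_scal, Hu, Hx.
  - intros x. apply (continuous_ext (fun y => t * Derive_clamp a b u y)).
    + intros y. symmetry. apply Derive_clamp_scal.
    + apply continuous_Rmult; [apply continuous_Rconst | apply continuous_Derive_clamp, Hu].
Qed.

Lemma is_derive_RInt_upper (f : R -> R) c x : (forall y, continuous f y) ->
  is_derive (fun y => RInt f c y) x (f x).
Proof.
  intros Hf. apply (is_derive_RInt (V := R_CompleteNormedModule) f _ c x); [|apply Hf].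
  apply filter_forall. intros y. apply (RInt_correct (V := R_CompleteNormedModule)).
  apply (ex_RInt_continuous (V := R_CompleteNormedModule)). intros; apply Hf.
Qed.

Lemma C1_on_RInt (f : R -> R) c : (forall y, continuous f y) ->
  C1_on a b (fun x => RInt f c x).
Proof.
  intros Hf. apply C1_on_iff. split.
  - intros x _. eexists. apply is_derive_RInt_upper, Hf.
  - intros x. apply (continuous_ext (fun y => f (clamp a b y))).
    + intros y. symmetry. apply is_derive_unique, is_derive_RInt_upper, Hf.
    + apply (continuous_comp (clamp a b) f); [|apply Hf].
      apply (continuous_lipschitz _ 1). intros y. rewrite Rmult_1_l. apply clamp_lipschitz.
Qed.

Lemma distC1_lt_add_scal w phi : C1_on a b w -> C1_on a b phi ->
  exists B, 0 < B /\ forall t eps, Rabs t * B < eps ->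
    distC1_lt a b (fun x => w x + t * phi x) w eps.
Proof.
  intros Hw Hphi.
  destruct (continuous_bounded phi a b Hab) as [Bp [HBp Hphib]].
  { intros x Hx. apply C1_on_continuous; assumption. }
  destruct (continuous_bounded (Derive_clamp a b phi) a b Hab) as [Bd [HBd HDphib]].
  { intros x _. apply continuous_Derive_clamp, Hphi. }
  exists (Bp + Bd). split; [lra|]. intros t eps Ht.
  assert (Hscal : forall y B, Rabs y <= B -> Rabs (t * y) <= Rabs t * B).
  { intros y B Hy. rewrite Rabs_mult. apply Rmult_le_compat_l; [apply Rabs_pos | exact Hy]. }
  exists (Rabs t * Bp), (Rabs t * Bd). split; [lra | split]; intros x Hx.
  - replace (w x + t * phi x - w x) with (t * phi x) by ring. auto.
  - rewrite <- !Derive_clamp_id by exact Hx.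
    rewrite (Derive_clamp_plus w _ x Hw (C1_on_scal phi t Hphi)), Derive_clamp_scal.
    replace (Derive_clamp a b w x + t * Derive_clamp a b phi x - Derive_clamp a b w x)
      with (t * Derive_clamp a b phi x) by ring. auto.
Qed.

End C1_functions.

#[local] Hint Resolve C1_on_continuous continuous_Derive_clamp : cont.

Ltac cont :=
  lazymatch goal with
  | |- continuous (fun _ => ?c) _ => apply continuous_Rconst
  | |- continuous (fun y => @?f y + @?h y) _ => apply (continuous_Rplus f h); cont
  | |- continuous (fun y => @?f y - @?h y) _ => apply (continuous_Rminus f h); cont
  | |- continuous (fun y => @?f y * @?h y) _ => apply (continuous_Rmult f h); cont
  | |- continuous (fun y => @?f y ^ 2) _ => apply (continuous_Rsqr f); cont
  | |- continuous (fun y => Rabs (@?f y)) _ => apply (continuous_Rabs_fun f); cont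
  | |- continuous (fun y => ?F y) _ => eauto with cont
  | |- continuous (fun y => ?F (@?f y)) _ => apply (continuous_comp f F); [cont | eauto with cont]
  | |- _ => eauto with cont
  end.

Ltac integrable := apply ex_RInt_cont; [lra | intros; cont].

Lemma Phi_Derive_clamp a b K g u : a <= b ->
  Phi a b K g u = RInt (fun x => (Derive_clamp a b u x - K) ^ 2 + g (u x)) a b.
Proof.
  intros Hab. apply RInt_ext_closed; [exact Hab|].
  intros x Hx. rewrite Derive_clamp_id; auto.
Qed.

Definition clip (T p : R) : R := Rmax (- T) (Rmin T p).

Definition cutoff (T p : R) : R := Rmax 0 (Rmin 1 (3 - 4 * Rabs p / T)).

Lemma continuous_clip T p : continuous (clip T) p.
Proof.
  apply (continuous_lipschitz _ 1). intros q. unfold clip, Rmax, Rmin.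
  repeat destruct Rle_dec; unfold Rabs; repeat destruct Rcase_abs; lra.
Qed.

Lemma cutoff_mem T p : 0 <= cutoff T p <= 1.
Proof. unfold cutoff, Rmax, Rmin. repeat destruct Rle_dec; lra. Qed.

Section Truncation.

Variable T : R.
Hypothesis HT : 0 < T.

Lemma clip_abs_le p : Rabs (clip T p) <= T.
Proof.
  unfold clip, Rmax, Rmin.
  repeat destruct Rle_dec; unfold Rabs; repeat destruct Rcase_abs; lra.
Qed.

Lemma continuous_cutoff p : continuous (cutoff T) p.
Proof.
  apply (continuous_lipschitz _ (4 / T)). intros q. unfold cutoff.
  assert (H : Rabs ((3 - 4 * Rabs q / T) - (3 - 4 * Rabs p / T)) <= 4 / T * Rabs (q - p)).
  { replace ((3 - 4 * Rabs q / T) - (3 - 4 * Rabs p / T))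
      with (4 / T * (Rabs p - Rabs q)) by (field; lra).
    assert (H4T : 0 < 4 / T) by (apply Rdiv_lt_0_compat; lra).
    rewrite Rabs_mult, (Rabs_pos_eq (4 / T)) by lra.
    apply Rmult_le_compat_l; [lra|].
    rewrite Rabs_minus_sym. apply Rabs_triang_inv2. }
  revert H. generalize (3 - 4 * Rabs q / T) (3 - 4 * Rabs p / T) (4 / T * Rabs (q - p)).
  intros x y c. unfold Rmax, Rmin.
  repeat destruct Rle_dec; unfold Rabs; repeat destruct Rcase_abs; lra.
Qed.

Lemma Rabs_sub_clip_le p : Rabs (p - clip T p) <= p ^ 2 / (4 * T).
Proof.
  apply Rmult_le_reg_r with (4 * T); [lra|].
  replace (p ^ 2 / (4 * T) * (4 * T)) with (p ^ 2) by (field; lra).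
  pose proof (pow2_ge_0 (p - 2 * T)). pose proof (pow2_ge_0 (p + 2 * T)).
  unfold clip, Rmax, Rmin.
  repeat destruct Rle_dec; unfold Rabs; repeat destruct Rcase_abs; nra.
Qed.

Lemma cutoff_ge p : 1 - 4 * p ^ 2 / T ^ 2 <= cutoff T p.
Proof.
  pose proof (cutoff_mem T p) as Hmem. unfold cutoff in *.
  rewrite <- pow2_abs. pose proof (Rabs_pos p). set (r := Rabs p) in *.
  destruct (Rle_dec r (T / 2)).
  - assert (1 <= 3 - 4 * r / T).
    { apply Rmult_le_reg_r with T; [lra|].
      replace ((3 - 4 * r / T) * T) with (3 * T - 4 * r) by (field; lra). lra. }
    assert (0 <= 4 * r ^ 2 / T ^ 2).
    { apply Rmult_le_pos; [nra | apply Rlt_le, Rinv_0_lt_compat; nra]. }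
    unfold Rmax, Rmin. repeat destruct Rle_dec; lra.
  - assert (1 <= 4 * r ^ 2 / T ^ 2).
    { apply Rmult_le_reg_r with (T ^ 2); [nra|].
      replace (4 * r ^ 2 / T ^ 2 * T ^ 2) with (4 * r ^ 2) by (field; lra). nra. }
    lra.
Qed.

(* Where the cutoff is positive, [|p| < 3T/4], so [clip T p = p]; elsewhere
   the loss [p^2 - T^2] dominates [2 T |p - clip T p|]. *)
Lemma truncation_energy p mu :
  2 * T * Rabs (p - clip T p) - 3 / 2 * T * Rabs mu * cutoff T p - mu ^ 2 * cutoff T p
  <= p ^ 2 - (clip T p + mu * cutoff T p) ^ 2.
Proof.
  destruct (cutoff_mem T p) as [H0 H1].
  destruct (Req_dec (cutoff T p) 0) as [E|E].
  - rewrite E. unfold clip, Rmax, Rmin.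
    repeat destruct Rle_dec; unfold Rabs; repeat destruct Rcase_abs; nra.
  - assert (Hp : Rabs p < 3 * T / 4).
    { apply Rmult_lt_reg_r with (4 / T); [apply Rdiv_lt_0_compat; lra|].
      replace (3 * T / 4 * (4 / T)) with 3 by (field; lra).
      revert E. unfold cutoff, Rmax, Rmin. repeat destruct Rle_dec; intros; lra. }
    assert (Hc : clip T p = p).
    { revert Hp. unfold clip, Rmax, Rmin.
      repeat destruct Rle_dec; unfold Rabs; repeat destruct Rcase_abs; intros; lra. }
    rewrite Hc, Rminus_diag, Rabs_R0. set (t := cutoff T p) in *.
    assert (mu * p <= Rabs mu * (3 * T / 4)).
    { eapply Rle_trans; [apply Rle_abs|]. rewrite Rabs_mult.
      apply Rmult_le_compat_l; [apply Rabs_pos | lra]. }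
    assert (0 <= mu ^ 2) by nra.
    nra.
Qed.

End Truncation.

Section Derivative_truncation.

Variables (a b T : R) (psi : R -> R).
Hypotheses (Hab : a < b) (HT : 0 < T) (Hpsi : forall x : R, continuous psi x).
Hypothesis Hsmall : RInt (fun x => psi x ^ 2) a b < T ^ 2 * (b - a) / 8.

Let excess : R := RInt (fun x => Rabs (psi x - clip T (psi x))) a b.
Let lam : R := RInt (fun x => psi x - clip T (psi x)) a b.
Let mass : R := RInt (fun x => cutoff T (psi x)) a b.
Let mu := lam / mass.
Let psit x := clip T (psi x) + mu * cutoff T (psi x).

Let continuous_cutoff_T p : continuous (cutoff T) p := continuous_cutoff T HT p.

#[local] Hint Resolve Hpsi continuous_clip continuous_cutoff_T : cont.

Let continuous_psit x : continuous psit x.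
Proof. unfold psit. cont. Qed.

#[local] Hint Resolve continuous_psit : cont.

Let excess_nonneg : 0 <= excess.
Proof. apply RInt_ge_0; [lra | integrable | intros; apply Rabs_pos]. Qed.

Let excess_le : excess <= RInt (fun x => psi x ^ 2) a b / (4 * T).
Proof.
  unfold Rdiv. rewrite Rmult_comm, <- RInt_Rscal by integrable.
  apply RInt_le_closed; [lra | integrable | integrable |].
  intros x _. rewrite Rmult_comm. apply Rabs_sub_clip_le, HT.
Qed.

Let mass_gt : (b - a) / 2 < mass.
Proof.
  apply Rlt_le_trans with ((b - a) * 1 - 4 / T ^ 2 * RInt (fun x => psi x ^ 2) a b).
  { apply Rmult_lt_compat_l with (r := 4 / T ^ 2) in Hsmall;
      [|apply Rdiv_lt_0_compat; nra].
    replace (4 / T ^ 2 * (T ^ 2 * (b - a) / 8)) with ((b - a) / 2) in Hsmall by (field; lra).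
    lra. }
  rewrite <- RInt_Rscal by integrable.
  change ((b - a) * 1) with (scal (b - a) 1). rewrite <- (RInt_const (V := R_CompleteNormedModule)).
  rewrite <- RInt_Rminus by integrable.
  apply RInt_le_closed; [lra | integrable | integrable |].
  intros x _. replace (4 / T ^ 2 * psi x ^ 2) with (4 * psi x ^ 2 / T ^ 2) by (field; lra).
  apply cutoff_ge, HT.
Qed.

Let Rabs_lam_le : Rabs lam <= excess.
Proof. apply abs_RInt_le; [lra | integrable]. Qed.

Let mu_mass : mu * mass = lam.
Proof. unfold mu. field. lra. Qed.

Let Rabs_mu_mass : Rabs mu * mass = Rabs lam.
Proof. rewrite <- mu_mass, Rabs_mult, (Rabs_pos_eq mass); lra. Qed.

Let Rabs_mu_le : Rabs mu <= T / 16.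
Proof.
  apply Rmult_le_reg_r with mass; [lra|]. rewrite Rabs_mu_mass.
  apply Rle_trans with excess; [exact Rabs_lam_le|].
  apply Rle_trans with (RInt (fun x => psi x ^ 2) a b / (4 * T)); [exact excess_le|].
  apply Rmult_lt_compat_r with (r := / (4 * T)) in Hsmall; [|apply Rinv_0_lt_compat; lra].
  replace (T ^ 2 * (b - a) / 8 * / (4 * T)) with (T / 16 * ((b - a) / 2)) in Hsmall
    by (field; lra).
  assert (T / 16 * ((b - a) / 2) <= T / 16 * mass) by (apply Rmult_le_compat_l; lra).
  unfold Rdiv at 1. lra.
Qed.

Let RInt_psit : RInt psit a b = RInt psi a b :> R.
Proof.
  unfold psit. rewrite RInt_Rplus, RInt_Rscal by integrable. fold mass. rewrite mu_mass.
  unfold lam. rewrite RInt_Rminus by integrable. ring.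
Qed.

Let Rabs_psit_le x : Rabs (psit x) <= 17 / 16 * T.
Proof.
  unfold psit. eapply Rle_trans; [apply Rabs_triang|]. rewrite Rabs_mult.
  pose proof (clip_abs_le T HT (psi x)). destruct (cutoff_mem T (psi x)).
  rewrite (Rabs_pos_eq (cutoff T (psi x))) by lra.
  assert (Rabs mu * cutoff T (psi x) <= Rabs mu) by (pose proof (Rabs_pos mu); nra).
  lra.
Qed.

Let Rabs_RInt_psit_sub_le x : a <= x <= b ->
  Rabs (RInt (fun y => psit y - psi y) a x) <= 2 * excess.
Proof.
  intros Hx. eapply Rle_trans; [apply abs_RInt_le; [lra | integrable]|].
  apply Rle_trans
    with (RInt (fun y => Rabs (psi y - clip T (psi y)) + Rabs mu * cutoff T (psi y)) a x).
  { apply RInt_le_closed; [lra | integrable | integrable |].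
    intros y _. unfold psit.
    replace (clip T (psi y) + mu * cutoff T (psi y) - psi y)
      with (- (psi y - clip T (psi y)) + mu * cutoff T (psi y)) by ring.
    eapply Rle_trans; [apply Rabs_triang|].
    rewrite Rabs_Ropp, Rabs_mult, (Rabs_pos_eq (cutoff T (psi y))) by apply cutoff_mem.
    lra. }
  eapply Rle_trans; [apply RInt_le_of_nonneg; [exact Hx | integrable |]|].
  { intros y _. pose proof (Rabs_pos mu). pose proof (cutoff_mem T (psi y)).
    pose proof (Rabs_pos (psi y - clip T (psi y))). nra. }
  rewrite RInt_Rplus, RInt_Rscal by integrable. fold excess mass.
  rewrite Rabs_mu_mass. lra.
Qed.

Let RInt_sq_sub_psit_sq_ge :
  7 / 16 * T * excess <= RInt (fun x => psi x ^ 2 - psit x ^ 2) a b.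
Proof.
  apply Rle_trans with (RInt (fun x => 2 * T * Rabs (psi x - clip T (psi x))
    - 3 / 2 * T * Rabs mu * cutoff T (psi x) - mu ^ 2 * cutoff T (psi x)) a b).
  2: { apply RInt_le_closed; [lra | integrable | integrable |].
       intros x _. apply truncation_energy, HT. }
  rewrite !RInt_Rminus, !RInt_Rscal by integrable. fold excess mass.
  assert (mu ^ 2 * mass <= T / 16 * excess).
  { replace (mu ^ 2 * mass) with (Rabs mu * (Rabs mu * mass))
      by (rewrite <- pow2_abs; ring).
    rewrite Rabs_mu_mass.
    apply Rmult_le_compat;
      [apply Rabs_pos | apply Rabs_pos | exact Rabs_mu_le | exact Rabs_lam_le]. }
  assert (3 / 2 * T * Rabs mu * mass <= 3 / 2 * T * excess).
  { rewrite Rmult_assoc, Rabs_mu_mass. apply Rmult_le_compat_l; lra. }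
  lra.
Qed.

Lemma derivative_truncation : exists (phi : R -> R) (E : R),
  (forall x, continuous phi x) /\
  RInt phi a b = RInt psi a b /\
  (forall x, Rabs (phi x) <= 17 / 16 * T) /\
  0 <= E <= RInt (fun x => psi x ^ 2) a b / (4 * T) /\
  (forall x, a <= x <= b -> Rabs (RInt (fun y => phi y - psi y) a x) <= 2 * E) /\
  7 / 16 * T * E <= RInt (fun x => psi x ^ 2 - phi x ^ 2) a b.
Proof.
  exists psit, excess.
  split; [exact continuous_psit|]. split; [exact RInt_psit|].
  split; [exact Rabs_psit_le|]. split; [exact (conj excess_nonneg excess_le)|].
  split; [exact Rabs_RInt_psit_sub_le | exact RInt_sq_sub_psit_sq_ge].
Qed.

End Derivative_truncation.

Definition admissible (a b : R) (Da Db : bool) (phi : R -> R) : Prop :=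
  C1_on a b phi /\ (Da = true -> phi a = 0) /\ (Db = true -> phi b = 0).

Lemma in_M_self a b Da Db u0 : C1_on a b u0 -> in_M a b Da Db u0 u0.
Proof. intros Hu0. split; [exact Hu0 | split; reflexivity]. Qed.

Lemma admissible_sub a b Da Db u0 v w : a <= b ->
  in_M a b Da Db u0 v -> in_M a b Da Db u0 w -> admissible a b Da Db (fun x => v x - w x).
Proof.
  intros Hab [Hv [Hva Hvb]] [Hw [Hwa Hwb]]. split; [apply C1_on_minus; assumption|].
  split; intros HD; [rewrite (Hva HD), (Hwa HD) | rewrite (Hvb HD), (Hwb HD)]; ring.
Qed.

Lemma admissible_scal a b Da Db phi t : a <= b ->
  admissible a b Da Db phi -> admissible a b Da Db (fun x => t * phi x).
Proof.
  intros Hab [Hphi [Ha Hb]]. split; [apply C1_on_scal; assumption|].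
  split; intros HD; [rewrite (Ha HD) | rewrite (Hb HD)]; ring.
Qed.

Lemma in_M_add a b Da Db u0 w phi : a <= b ->
  in_M a b Da Db u0 w -> admissible a b Da Db phi -> in_M a b Da Db u0 (fun x => w x + phi x).
Proof.
  intros Hab [Hw [Hwa Hwb]] [Hphi [Ha Hb]]. split; [apply C1_on_plus; assumption|].
  split; intros HD; [rewrite (Hwa HD), (Ha HD) | rewrite (Hwb HD), (Hb HD)]; ring.
Qed.

Definition first_variation (a b K : R) (g u0 phi : R -> R) : R :=
  RInt (fun x => 2 * (Derive_clamp a b u0 x - K) * Derive_clamp a b phi x
                 + Derive g (u0 x) * phi x) a b.

Section Variation.

Variables (a b K : R) (g u0 : R -> R) (Da Db : bool).
Hypotheses (Hab : a < b) (Hg : C1_R g) (Hu0 : C1_on a b u0).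

Let continuous_g y : continuous g y.
Proof. apply (ex_derive_continuous (V := R_NormedModule)), (proj1 Hg). Qed.

Let continuous_Derive_g y : continuous (Derive g) y := proj2 Hg y.

Let Hab_le : a <= b := Rlt_le _ _ Hab.

#[local] Hint Resolve Hab_le continuous_g continuous_Derive_g : cont.

Definition linearization_bound (eta d : R) : Prop :=
  forall x y1 y2, a <= x <= b -> Rabs (y1 - u0 x) <= d -> Rabs (y2 - u0 x) <= d ->
    Rabs (g y1 - g y2 - Derive g (u0 x) * (y1 - y2)) <= eta * Rabs (y1 - y2).

(* [Derive g] is uniformly continuous on a compact neighbourhood of the range of [u0]. *)
Lemma exists_linearization_bound eta : 0 < eta -> exists d, 0 < d /\ linearization_bound eta d.
Proof.
  intros Heta.
  destruct (continuous_bounded u0 a b) as [B [HB0 HB]]; [lra | intros; cont |].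
  destruct (Heine_cor2 (f := Derive g) (a := - B - 1) (b := B + 1)
              (fun x _ => proj2 (continuity_pt_filterlim _ _) (proj2 Hg x))
              (mkposreal eta Heta)) as [[del Hdel] Hunif].
  simpl in Hunif.
  exists (Rmin (del / 2) (1 / 2)). split; [apply Rmin_pos; lra|].
  intros x y1 y2 Hx H1 H2. apply (MVT_remainder_le g (u0 x) (Rmin (del / 2) (1 / 2))); auto.
  - apply (proj1 Hg).
  - intros z Hz. specialize (HB x Hx).
    pose proof (Rmin_l (del / 2) (1 / 2)). pose proof (Rmin_r (del / 2) (1 / 2)).
    apply Rlt_le, Hunif; revert Hz HB; unfold Rabs; repeat destruct Rcase_abs; intros; lra.
Qed.

Lemma RInt_remainder_le eta d delta v w : 0 <= eta ->
  linearization_bound eta d -> C1_on a b v -> C1_on a b w ->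
  (forall x, a <= x <= b -> Rabs (v x - u0 x) <= d) ->
  (forall x, a <= x <= b -> Rabs (w x - u0 x) <= d) ->
  (forall x, a <= x <= b -> Rabs (v x - w x) <= delta) ->
  Rabs (RInt (fun x => g (v x) - g (w x) - Derive g (u0 x) * (v x - w x)) a b)
    <= (b - a) * (eta * delta).
Proof.
  intros Heta Hlin Hv Hw Hvd Hwd Hvw.
  apply abs_RInt_le_const; [lra | integrable |].
  intros x Hx. eapply Rle_trans; [apply Hlin; auto|].
  apply Rmult_le_compat_l; auto.
Qed.

Lemma Phi_sub v w : C1_on a b v -> C1_on a b w ->
  Phi a b K g v - Phi a b K g w =
    first_variation a b K g u0 (fun x => v x - w x)
  + RInt (fun x => (Derive_clamp a b v x - Derive_clamp a b u0 x) ^ 2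
                   - (Derive_clamp a b w x - Derive_clamp a b u0 x) ^ 2) a b
  + RInt (fun x => g (v x) - g (w x) - Derive g (u0 x) * (v x - w x)) a b.
Proof.
  intros Hv Hw. assert (Hvw : C1_on a b (fun y => v y - w y)) by (apply C1_on_minus; assumption).
  rewrite !Phi_Derive_clamp by lra. unfold first_variation.
  set (f1 := fun x => _ + Derive g (u0 x) * (v x - w x)).
  set (f2 := fun x => _ - (Derive_clamp a b w x - _) ^ 2).
  set (f3 := fun x => g (v x) - g (w x) - _).
  rewrite <- RInt_Rminus by integrable.
  rewrite (RInt_ext_closed _ (fun x => f1 x + f2 x + f3 x)) by
    (lra || (intros x _; unfold f1, f2, f3; rewrite Derive_clamp_minus by assumption; ring)).
  rewrite !RInt_Rplus; [reflexivity|..].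
  all: unfold f1, f2, f3; integrable.
Qed.

Lemma Phi_add_scal_sub phi t : C1_on a b phi ->
  Phi a b K g (fun x => u0 x + t * phi x) - Phi a b K g u0 =
    t * first_variation a b K g u0 phi
  + t ^ 2 * RInt (fun x => Derive_clamp a b phi x ^ 2) a b
  + RInt (fun x => g (u0 x + t * phi x) - g (u0 x)
                   - Derive g (u0 x) * (u0 x + t * phi x - u0 x)) a b.
Proof.
  intros Hphi.
  assert (Hut : C1_on a b (fun x => u0 x + t * phi x)) by (apply C1_on_plus, C1_on_scal; auto).
  rewrite Phi_sub by assumption. unfold first_variation.
  rewrite <- !RInt_Rscal by integrable.
  assert (HD : forall x, Derive_clamp a b (fun y => u0 y + t * phi y) x
                         = Derive_clamp a b u0 x + t * Derive_clamp a b phi x).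
  { intros x. rewrite (Derive_clamp_plus a b Hab_le u0 _ x Hu0 (C1_on_scal a b Hab_le phi t Hphi)).
    rewrite Derive_clamp_scal. reflexivity. }
  f_equal; f_equal; apply RInt_ext_closed; try lra; intros x _.
  - rewrite Derive_clamp_minus, HD by auto. ring.
  - rewrite HD. ring.
Qed.

Lemma RInt_remainder_scal_le phi eps : C1_on a b phi -> 0 < eps ->
  exists tau, 0 < tau /\ forall t, Rabs t < tau ->
    Rabs (RInt (fun x => g (u0 x + t * phi x) - g (u0 x)
                         - Derive g (u0 x) * (u0 x + t * phi x - u0 x)) a b) <= eps * Rabs t.
Proof.
  intros Hphi Heps.
  destruct (continuous_bounded phi a b) as [B [HB Hphib]]; [lra | intros; cont |].
  set (eta := eps / ((b - a) * B)).
  assert (Heta : 0 < eta) by (apply Rdiv_lt_0_compat; [lra | apply Rmult_lt_0_compat; lra]).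
  destruct (exists_linearization_bound eta Heta) as [d [Hd Hlin]].
  exists (d / B). split; [apply Rdiv_lt_0_compat; lra|]. intros t Ht.
  apply Rlt_div_r in Ht; [|lra].
  assert (Hdiff : forall x, a <= x <= b -> Rabs (u0 x + t * phi x - u0 x) <= Rabs t * B).
  { intros x Hx. replace (u0 x + t * phi x - u0 x) with (t * phi x) by ring.
    rewrite Rabs_mult. apply Rmult_le_compat_l; [apply Rabs_pos | auto]. }
  replace (eps * Rabs t) with ((b - a) * (eta * (Rabs t * B))) by (unfold eta; field; lra).
  apply (RInt_remainder_le eta d _ (fun x => u0 x + t * phi x) u0); try lra; auto.
  - apply C1_on_plus, C1_on_scal; auto.
  - intros x Hx. apply Rle_trans with (Rabs t * B); [auto | lra].
  - intros x _. rewrite Rminus_diag, Rabs_R0. lra.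
Qed.

Section Weak_minimizer.

Variable e0 : R.
Hypothesis He0 : 0 < e0.
Hypothesis Hweak : forall v, in_M a b Da Db u0 v -> distC1_lt a b v u0 e0 ->
  Phi a b K g u0 <= Phi a b K g v.

Lemma first_variation_eq0 phi :
  admissible a b Da Db phi -> first_variation a b K g u0 phi = 0.
Proof.
  intros Hphi. pose proof Hphi as [Hphi1 _].
  apply first_order_coef_eq0 with (RInt (fun x => Derive_clamp a b phi x ^ 2) a b).
  intros eps Heps.
  destruct (RInt_remainder_scal_le phi eps Hphi1 Heps) as [tau [Htau Hrem]].
  destruct (distC1_lt_add_scal a b Hab_le u0 phi Hu0 Hphi1) as [B [HB Hdist]].
  exists (Rmin tau (e0 / B)). split; [apply Rmin_pos; [lra | apply Rdiv_lt_0_compat; lra]|].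
  intros t Ht.
  assert (Hmin : Phi a b K g u0 <= Phi a b K g (fun x => u0 x + t * phi x)).
  { apply Hweak.
    - apply in_M_add; [lra | apply in_M_self, Hu0 | apply admissible_scal; [lra | exact Hphi]].
    - apply Hdist, Rlt_div_r; [lra|]. eapply Rlt_le_trans; [exact Ht | apply Rmin_r]. }
  specialize (Hrem t (Rlt_le_trans _ _ _ Ht (Rmin_l _ _))).
  pose proof (Phi_add_scal_sub phi t Hphi1) as Hexp.
  apply Rabs_le_between in Hrem. lra.
Qed.

Lemma Phi_sub_in_M v w : in_M a b Da Db u0 v -> in_M a b Da Db u0 w ->
  Phi a b K g v - Phi a b K g w =
    RInt (fun x => (Derive_clamp a b v x - Derive_clamp a b u0 x) ^ 2
                   - (Derive_clamp a b w x - Derive_clamp a b u0 x) ^ 2) a b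
  + RInt (fun x => g (v x) - g (w x) - Derive g (u0 x) * (v x - w x)) a b.
Proof.
  intros Hv Hw. rewrite Phi_sub by (apply Hv || apply Hw).
  rewrite first_variation_eq0 by (apply (admissible_sub a b Da Db u0); assumption). ring.
Qed.

Lemma Phi_le_of_large_energy eta d m v : 0 <= eta -> linearization_bound eta d -> m <= d ->
  in_M a b Da Db u0 v -> (forall x, a <= x <= b -> Rabs (v x - u0 x) <= m) ->
  (b - a) * (eta * m) <= RInt (fun x => (Derive_clamp a b v x - Derive_clamp a b u0 x) ^ 2) a b ->
  Phi a b K g u0 <= Phi a b K g v.
Proof.
  intros Heta Hlin Hmd Hv Hvm Henergy.
  pose proof (Phi_sub_in_M v u0 Hv (in_M_self a b Da Db u0 Hu0)) as Hexp.
  rewrite (RInt_ext_closed (fun x => _ - (_ - _) ^ 2)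
             (fun x => (Derive_clamp a b v x - Derive_clamp a b u0 x) ^ 2)) in Hexp
    by (lra || (intros x _; ring)).
  assert (Hrem : Rabs (RInt (fun x => g (v x) - g (u0 x) - Derive g (u0 x) * (v x - u0 x)) a b)
                 <= (b - a) * (eta * m)).
  { apply (RInt_remainder_le eta d m v u0 Heta Hlin (proj1 Hv) Hu0); [| |exact Hvm].
    - intros x Hx. apply Rle_trans with m; auto.
    - intros x _. rewrite Rminus_diag, Rabs_R0. apply Rle_trans with m; [|exact Hmd].
      apply Rle_trans with (Rabs (v a - u0 a)); [apply Rabs_pos | apply Hvm; lra]. }
  apply Rabs_le_between in Hrem. lra.
Qed.

Lemma in_M_prescribed_derivative v phi : in_M a b Da Db u0 v ->
  (forall x, continuous phi x) ->
  RInt phi a b = RInt (fun x => Derive_clamp a b v x - Derive_clamp a b u0 x) a b ->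
  exists w, in_M a b Da Db u0 w /\
    (forall x, a <= x <= b -> Derive_clamp a b w x - Derive_clamp a b u0 x = phi x) /\
    (forall x, a <= x <= b -> w x - v x =
       RInt (fun y => phi y - (Derive_clamp a b v y - Derive_clamp a b u0 y)) a x).
Proof.
  intros Hv Hphi Hmean. pose proof Hv as [Hv1 _].
  set (psi := fun y => Derive_clamp a b v y - Derive_clamp a b u0 y) in *.
  assert (Hpsi : forall y, continuous psi y) by (intros; unfold psi; cont).
  assert (Hcont : forall y, continuous (fun y => phi y - psi y) y) by (intros; cont).
  set (c := fun x => RInt (fun y => phi y - psi y) a x).
  assert (Hc : admissible a b Da Db c).
  { split; [apply C1_on_RInt; [lra | exact Hcont]|]. split; intros _; unfold c.
    - apply (RInt_point (V := R_CompleteNormedModule)).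
    - rewrite RInt_Rminus, Hmean by integrable. ring. }
  exists (fun x => v x + c x). split; [|split].
  - apply in_M_add; [lra | exact Hv | exact Hc].
  - intros x Hx. rewrite Derive_clamp_plus by (lra || apply Hv1 || apply Hc).
    rewrite (Derive_clamp_id a b Hab_le c x Hx).
    rewrite (is_derive_unique c x _ (is_derive_RInt_upper _ a x Hcont)). unfold psi. ring.
  - intros x _. unfold c, psi. ring.
Qed.

Lemma Phi_le_of_small_energy T d m v : 0 < T ->
  linearization_bound (T / (8 * (b - a))) d ->
  in_M a b Da Db u0 v -> (forall x, a <= x <= b -> Rabs (v x - u0 x) <= m) ->
  let P := RInt (fun x => (Derive_clamp a b v x - Derive_clamp a b u0 x) ^ 2) a b in
  P < T ^ 2 * (b - a) / 8 -> m + P / (2 * T) <= d -> m + P / (2 * T) + 17 / 16 * T < e0 ->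
  Phi a b K g u0 <= Phi a b K g v.
Proof.
  intros HT Hlin Hv Hvm P HP Hd He. pose proof Hv as [Hv1 _].
  set (psi := fun x => Derive_clamp a b v x - Derive_clamp a b u0 x).
  assert (Hpsi : forall x, continuous psi x) by (intros; unfold psi; cont).
  destruct (derivative_truncation a b T psi Hab HT Hpsi HP)
    as (phi & E & Hphi & Hmean & Hphib & [HE0 HEP] & Hpart & Henergy).
  change (RInt (fun x => psi x ^ 2) a b) with P in HEP.
  destruct (in_M_prescribed_derivative v phi Hv Hphi Hmean) as (w & Hw & HDw & Hwv).
  assert (HP0 : 0 <= P).
  { apply RInt_ge_0; [lra | integrable | intros; apply pow2_ge_0]. }
  assert (H2E : 2 * E <= P / (2 * T)).
  { replace (P / (2 * T)) with (2 * (P / (4 * T))) by (field; lra). lra. }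
  assert (Hwu0 : forall x, a <= x <= b -> Rabs (w x - u0 x) <= m + 2 * E).
  { intros x Hx. replace (w x - u0 x) with ((v x - u0 x) + (w x - v x)) by ring.
    eapply Rle_trans; [apply Rabs_triang|]. rewrite Hwv by exact Hx.
    apply Rplus_le_compat; [apply Hvm | apply Hpart]; exact Hx. }
  assert (Hu0w : Phi a b K g u0 <= Phi a b K g w).
  { apply Hweak; [exact Hw|]. exists (m + 2 * E), (17 / 16 * T).
    split; [lra | split; [exact Hwu0|]]. intros x Hx.
    rewrite <- !(Derive_clamp_id a b Hab_le) by exact Hx. rewrite HDw by exact Hx. apply Hphib. }
  pose proof (Phi_sub_in_M v w Hv Hw) as Hexp.
  rewrite (RInt_ext_closed _ (fun x => psi x ^ 2 - phi x ^ 2)) in Hexp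
    by (lra || (intros x Hx; rewrite HDw by exact Hx; reflexivity)).
  assert (Hrem : Rabs (RInt (fun x => g (v x) - g (w x) - Derive g (u0 x) * (v x - w x)) a b)
                 <= (b - a) * (T / (8 * (b - a)) * (2 * E))).
  { apply (RInt_remainder_le _ d _ v w); [apply Rlt_le, Rdiv_lt_0_compat; lra | exact Hlin
      | exact Hv1 | apply Hw | | |].
    - intros x Hx. specialize (Hvm x Hx). lra.
    - intros x Hx. specialize (Hwu0 x Hx). lra.
    - intros x Hx. rewrite <- Rabs_Ropp, Ropp_minus_distr, Hwv by exact Hx. apply Hpart, Hx. }
  replace ((b - a) * (T / (8 * (b - a)) * (2 * E))) with (T / 4 * E) in Hrem by (field; lra).
  (* the energy gain [7/16 T E] beats the [T/4 E] of the g-term *)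
  apply Rabs_le_between in Hrem. nra.
Qed.

Lemma weak_minimizer_strong_radius : exists s, 0 < s /\
  forall v, in_M a b Da Db u0 v -> distC_lt a b v u0 s -> Phi a b K g u0 <= Phi a b K g v.
Proof.
  set (T := e0 / 4). assert (HT : 0 < T) by (unfold T; lra).
  set (eta := T / (8 * (b - a))).
  assert (Heta : 0 < eta) by (apply Rdiv_lt_0_compat; lra).
  destruct (exists_linearization_bound eta Heta) as [d [Hd Hlin]].
  exists (Rmin (d / 2) (Rmin (T / 2) ((b - a) * T))).
  split; [repeat apply Rmin_pos; nra|]. intros v Hv [m [Hms Hvm]].
  assert (Hmd : m < d / 2) by (eapply Rlt_le_trans; [exact Hms | apply Rmin_l]).
  assert (HmT : m < T / 2)
    by (eapply Rlt_le_trans; [exact Hms | eapply Rle_trans; [apply Rmin_r | apply Rmin_l]]).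
  assert (HmL : m < (b - a) * T)
    by (eapply Rlt_le_trans; [exact Hms | eapply Rle_trans; [apply Rmin_r | apply Rmin_r]]).
  assert (Hm0 : 0 <= m)
    by (apply Rle_trans with (Rabs (v a - u0 a)); [apply Rabs_pos | apply Hvm; lra]).
  pose (P := RInt (fun x => (Derive_clamp a b v x - Derive_clamp a b u0 x) ^ 2) a b : R).
  destruct (Rle_lt_dec ((b - a) * (eta * m)) P) as [Hlarge | Hsmall].
  - apply (Phi_le_of_large_energy eta d m v); auto; lra.
  - replace ((b - a) * (eta * m)) with (T / 8 * m) in Hsmall by (unfold eta; field; lra).
    assert (HPm : P / (2 * T) < m / 16).
    { apply Rmult_lt_reg_r with (2 * T); [lra|].
      replace (P / (2 * T) * (2 * T)) with P by (field; lra). lra. }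
    apply (Phi_le_of_small_energy T d m v HT Hlin Hv Hvm); fold P.
    + apply Rlt_le_trans with (T / 8 * m); [exact Hsmall|]. nra.
    + lra.
    + unfold T in *. lra.
Qed.

End Weak_minimizer.

End Variation.

Theorem proposition2p3 (a b K : R) (g u0 : R -> R) (Da Db : bool) :
  a < b -> C1_R g -> C1_on a b u0 ->
  weak_minimizer a b K g Da Db u0 u0 ->
  strong_minimizer a b K g Da Db u0 u0.
Proof.
  intros Hab Hg Hu0 [HM [e0 [He0 Hweak]]].
  split; [exact HM|].
  exact (weak_minimizer_strong_radius a b K g u0 Da Db Hab Hg Hu0 e0 He0 Hweak).
Qed.
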